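(* Suppose $C\subseteq\mathbb{R}^n$ is smoothly approximately convex at $\bar x\in C$, and let $H:U\to\mathbb{R}^m$, where $U$ is an open neighborhood of $\bar x$ in $\mathbb{R}^n$, be a $\mathcal{C}^{(1)}$-smooth embedding. Then $H(C\cap U)$ is smoothly approximately convex at $H(\bar x)$.
   Context: A $\mathcal{C}^{(1)}$-smooth embedding is a $\mathcal{C}^{(1)}$ map $H$ with $\nabla H(w)$ injective for all $w$ that is a homeomorphism onto its image. A set $S\subseteq\mathbb{R}^N$ is smoothly approximately convex at $\bar z\in S$ if for every $\epsilon>0$ there is a neighborhood $W$ of $\bar z$ such that for all $z,z'\in S\cap W$ there is a map $\gamma:[0,1]\to S$, extending to a $\mathcal{C}^{(1)}$ map on an open neighborhood of $[0,1]$, with $\gamma(0)=z,\gamma(1)=z'$ and $\|\gamma'(t)-(z'-z)\|\le\epsilon\|z'-z\|$ for all $t\in[0,1]$. *)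

From HB Require Import structures.
From mathcomp Require Import all_boot all_order all_algebra.
From mathcomp Require Import all_classical all_reals all_analysis.
Set Implicit Arguments. Unset Strict Implicit. Unset Printing Implicit Defensive.
Import Order.TTheory GRing.Theory Num.Theory.
Import numFieldNormedType.Exports.
Local Open Scope classical_set_scope.
Local Open Scope ring_scope.

Definition C1_on (R : realType) (n m : nat) (U : set 'rV[R]_n)
    (f : 'rV[R]_n -> 'rV[R]_m) : Prop :=
  (forall w, U w -> differentiable f w) /\ {in U, continuous (jacobian f)}.

Definition homeo_onto_image (R : realType) (n m : nat) (U : set 'rV[R]_n)
    (H : 'rV[R]_n -> 'rV[R]_m) : Prop :=
  exists G : 'rV[R]_m -> 'rV[R]_n,
    (forall w, U w -> G (H w) = w) /\
    {within U, continuous H} /\ {within H @` U, continuous G}.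

Definition C1_embedding (R : realType) (n m : nat) (U : set 'rV[R]_n)
    (H : 'rV[R]_n -> 'rV[R]_m) : Prop :=
  C1_on U H /\ (forall w, U w -> injective ('d H w)) /\ homeo_onto_image U H.

(* gamma : [0,1] -> R^N extends to a C^1 map on an open neighbourhood of [0,1];
   gamma itself (a function on all of R) plays the role of the extension. *)
Definition C1_curve (R : realType) (N : nat) (gamma : R -> 'rV[R]_N) : Prop :=
  exists O : set R, open O /\ `[0, 1]%classic `<=` O /\
    (forall t, O t -> derivable gamma t 1) /\ {in O, continuous (derive1 gamma)}.

Definition smoothly_approx_convex (R : realType) (N : nat)
    (S : set 'rV[R]_N) (zbar : 'rV[R]_N) : Prop :=
  forall eps : R, 0 < eps ->
    exists W : set 'rV[R]_N, nbhs zbar W /\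
      forall z z', S z -> W z -> S z' -> W z' ->
        exists gamma : R -> 'rV[R]_N,
          C1_curve gamma /\
          (forall t, `[0, 1]%classic t -> S (gamma t)) /\
          gamma 0 = z /\ gamma 1 = z' /\
          (forall t, `[0, 1]%classic t -> `|(derive1 gamma) t - (z' - z)| <= eps * `|z' - z|).

(* On a small ball around xbar the Jacobian J of H stays within eta of A := J xbar,
   so H is nearly affine there: |H z' - H z - (z' - z) A| <= n eta |z' - z|.  As A is
   injective, |v| <= c |v A|, which turns this into |z' - z| <= 2 c |H z' - H z|.
   If g is a C^1 curve in C from z to z' with |g' - (z' - z)| <= a |z' - z|, then
   (H o g)' = g' J(g) is within n (a (|A| + eta) + 2 eta) |z' - z| of H z' - H z, a small
   multiple of |H z' - H z| by the lower bound.  Continuity of the inverse of H on H(U)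
   guarantees that points of H(C & U) near H xbar come from points of C near xbar. *)

From HB Require Import structures.
From mathcomp Require Import all_boot all_order all_algebra.
From mathcomp Require Import all_classical all_reals all_analysis.
From mathcomp Require Import lra ring.
Import Order.TTheory GRing.Theory Num.Theory.
Import numFieldNormedType.Exports.
Local Open Scope classical_set_scope.
Local Open Scope ring_scope.

Section MatrixNorm.
Context {R : realType}.

Lemma mx_norm_entry_le {p q} (M : 'M[R]_(p, q)) i j : `|M i j| <= `|M|.
Proof.
rewrite [leRHS]/Num.Def.normr/= mx_normrE.
exact: (le_bigmax _ (fun ij : 'I_p * 'I_q => `|M ij.1 ij.2|) (i, j)).
Qed.

Lemma normr_mulmx_le {k p q} (u : 'M[R]_(k, p)) (M : 'M[R]_(p, q)) :
  `|u *m M| <= p%:R * (`|u| * `|M|).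
Proof.
rewrite [leLHS]/Num.Def.normr/= mx_normrE.
apply: bigmax_le => [|[i j] _ /=]; first by rewrite !mulr_ge0.
rewrite mxE (le_trans (ler_norm_sum _ _ _)) // mulr_natl.
rewrite -[p in _ *+ p]card_ord -sumr_const; apply: ler_sum => l _.
by rewrite normrM ler_pM ?mx_norm_entry_le.
Qed.

Lemma continuous_mulmx {T : topologicalType} {k p q} (u : T -> 'M[R]_(k, p))
    (M : T -> 'M[R]_(p, q)) t :
  {for t, continuous u} -> {for t, continuous M} ->
  {for t, continuous (fun x => u x *m M x)}.
Proof.
move=> /cvgrPdist_le cu /cvgrPdist_le cM; apply/cvgrPdist_le => e e_gt0.
pose b := p%:R * (`|u t| + `|M t| + 1) + 1.
have b_gt0 : 0 < b by rewrite ltr_wpDl ?mulr_ge0 ?addr_ge0.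
pose d := Num.min 1 (e / b).
have d_gt0 : 0 < d by rewrite lt_min ltr01 divr_gt0.
have d_le1 : d <= 1 by rewrite ge_min lexx.
have db_le : d * b <= e by rewrite -ler_pdivlMr // ge_min lexx orbT.
near=> x.
have ux : `|u t - u x| <= d by near: x; exact: cu d d_gt0.
have Mx : `|M t - M x| <= d by near: x; exact: cM d d_gt0.
have ux_le : `|u x| <= `|u t| + 1.
  rewrite -[u x](subrKC (u t)) (le_trans (ler_normD _ _)) // lerD2l distrC.
  exact: le_trans ux d_le1.
have -> : u t *m M t - u x *m M x = (u t - u x) *m M t + u x *m (M t - M x).
  by rewrite mulmxBl mulmxBr addrA subrK.
have h1 : `|(u t - u x) *m M t| <= p%:R * (d * `|M t|).
  by rewrite (le_trans (normr_mulmx_le _ _)) // ler_wpM2l // ler_wpM2r.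
have h2 : `|u x *m (M t - M x)| <= p%:R * ((`|u t| + 1) * d).
  by rewrite (le_trans (normr_mulmx_le _ _)) // ler_wpM2l // ler_pM.
rewrite (le_trans (ler_normD _ _)) // (le_trans _ db_le) // /b.
lra.
Unshelve. all: by end_near.
Qed.

Lemma row_free_bounded_below {p q} {A : 'M[R]_(p, q)} : row_free A ->
  exists2 c, 0 < c & forall v : 'rV[R]_p, `|v| <= c * `|v *m A|.
Proof.
case/row_freeP => B AB; exists (q%:R * `|B| + 1) => [|v].
  by rewrite ltr_wpDl ?mulr_ge0.
rewrite -[v in leLHS]mulmx1 -AB mulmxA (le_trans (normr_mulmx_le _ _)) //.
by have := normr_ge0 (v *m A); lra.
Qed.

End MatrixNorm.

Section Derivatives.
Context {R : realType}.

Lemma mvt_mx_norm_le {p q} {F : R -> 'M[R]_(p, q)} {a b k : R} : a <= b ->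
  (forall s, a <= s <= b -> derivable F s 1) ->
  (forall s, a <= s <= b -> `|'D_1 F s| <= k) -> `|F b - F a| <= k * (b - a).
Proof.
move=> ab dF DF_le.
have k_ge0 : 0 <= k by apply: le_trans (DF_le a _); rewrite ?lexx ?ab.
rewrite [leLHS]/Num.Def.normr/= mx_normrE.
apply: bigmax_le => [|[i j] _ /=]; first by rewrite mulr_ge0 // subr_ge0.
rewrite !mxE.
have dFij s : a <= s <= b -> is_derive s 1 (fun t => F t i j) ('D_1 F s i j).
  move=> /dF dFs; rewrite (derive_mx dFs) mxE.
  by apply: derivableP; move/derivable_mxP: dFs; apply.
have cFij : {within `[a, b], continuous (fun t => F t i j)}.
  apply: continuous_in_subspaceT => s; rewrite inE /= in_itv /= => /dFij dFs.
  by apply: differentiable_continuous; apply/derivable1_diffP; case: dFs.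
have dFij_oo s : s \in `]a, b[ -> is_derive s 1 (fun t => F t i j) ('D_1 F s i j).
  by rewrite in_itv /= => /andP[? ?]; apply: dFij; rewrite !ltW.
have [c] := MVT_segment ab dFij_oo cFij.
rewrite in_itv /= => /andP[ac cb] ->.
rewrite normrM (ger0_norm (x := b - a)) ?subr_ge0 // ler_wpM2r ?subr_ge0 //.
by rewrite (le_trans (mx_norm_entry_le _ i j)) // DF_le // ac cb.
Qed.

Lemma is_derive_line {V W : normedModType R} {f : V -> W} {d z : V} {s : R} :
  derivable f (s *: d + z) d ->
  is_derive s 1 (fun t : R => f (t *: d + z)) ('D_d f (s *: d + z)).
Proof.
have shiftE : (fun h : R => h^-1 *: (f ((h *: 1 + s) *: d + z) - f (s *: d + z))) =
              (fun h : R => h^-1 *: (f (h *: d + (s *: d + z)) - f (s *: d + z))).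
  by apply/funext => h; rewrite [_ *: 1]mulr1 scalerDl addrA.
by move=> df; apply: DeriveDef; rewrite /derivable /derive /= shiftE.
Qed.

Lemma is_derive_scalel (V : normedModType R) (w : V) (s : R) :
  is_derive s 1 ( *:%R^~ w) w.
Proof.
have := is_derive_line (@derivable_id _ _ (s *: w + 0) w).
rewrite derive_id (_ : (fun t => id (t *: w + 0)) = *:%R^~ w) //.
by rewrite funeqE => t /=; rewrite addr0.
Qed.

Lemma derive1_comp_jacobian {p q} (g : R -> 'rV[R]_p) (f : 'rV[R]_p -> 'rV[R]_q) s :
  differentiable g s -> differentiable f (g s) ->
  derive1 (f \o g) s = derive1 g s *m jacobian f (g s).
Proof.
move=> dg df; rewrite derive1E'; last exact: differentiable_comp.
by rewrite diff_comp // /= derive1E' // /jacobian mul_rV_lin1.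
Qed.

Lemma row_free_jacobian {p q} {f : 'rV[R]_p -> 'rV[R]_q} {x : 'rV[R]_p} :
  injective ('d f x) -> row_free (jacobian f x).
Proof.
move=> df_inj; apply/inj_row_free => v; rewrite /jacobian mul_rV_lin1 => dfv0.
by apply: df_inj; rewrite dfv0 linear0.
Qed.

End Derivatives.

Section Chords.
Context {R : realType}.

(* The curve condition of [smoothly_approx_convex], whose body is convertible to
   [exists gamma, approx_chord_curve S eps z z' gamma]. *)
Definition approx_chord_curve {N} (S : set 'rV[R]_N) (eps : R) (z z' : 'rV[R]_N)
    (gamma : R -> 'rV[R]_N) : Prop :=
  C1_curve gamma /\ (forall t, `[0, 1]%classic t -> S (gamma t)) /\
  gamma 0 = z /\ gamma 1 = z' /\
  (forall t, `[0, 1]%classic t ->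
     `|derive1 gamma t - (z' - z)| <= eps * `|z' - z|).

Lemma ball_segment {N} {x z z' : 'rV[R]_N} {r s : R} :
  ball x r z -> ball x r z' -> 0 <= s <= 1 -> ball x r (s *: (z' - z) + z).
Proof.
rewrite -!ball_normE /ball_ /= => xz xz' /andP[s_ge0 s_le1].
have -> : x - (s *: (z' - z) + z) = (1 - s) *: (x - z) + s *: (x - z').
  rewrite [in LHS](_ : z' - z = (x - z) - (x - z')); last first.
    by rewrite [in RHS]opprB [in RHS]addrCA [in RHS]addrAC subrr add0r.
  by rewrite opprD addrCA addrC scalerBr opprB scalerBl scale1r addrA addrAC.
have m_lt : Num.max `|x - z| `|x - z'| < r by rewrite gt_max xz xz'.
rewrite (le_lt_trans (ler_normD _ _)) // !normrZ ger0_norm ?subr_ge0 // ger0_norm //.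
have : `|x - z| <= Num.max `|x - z| `|x - z'| by rewrite le_max lexx.
have : `|x - z'| <= Num.max `|x - z| `|x - z'| by rewrite le_max lexx orbT.
nra.
Qed.

Lemma chord_jacobian_le {n m} (f : 'rV[R]_n -> 'rV[R]_m) (A : 'M[R]_(n, m))
    (z z' : 'rV[R]_n) (eta : R) :
  (forall s, 0 <= s <= 1 -> differentiable f (s *: (z' - z) + z) /\
     `|jacobian f (s *: (z' - z) + z) - A| <= eta) ->
  `|f z' - f z - (z' - z) *m A| <= n%:R * eta * `|z' - z|.
Proof.
set d := z' - z => f_near.
pose F (s : R) := f (s *: d + z) - s *: (d *m A).
have dF (s : R) : 0 <= s <= 1 -> is_derive s 1 F (d *m (jacobian f (s *: d + z) - A)).
  move=> /f_near[df _]; rewrite mulmxBr -deriveEjacobian //.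
  apply: is_deriveB; last exact: is_derive_scalel.
  by apply: is_derive_line; apply: diff_derivable.
have F10 : F 1 - F 0 = f z' - f z - d *m A.
  by rewrite /F !scale1r !scale0r add0r subr0 subrK addrAC.
rewrite -F10 -[leRHS]mulr1 -[X in _ * X](subr0 1).
apply: mvt_mx_norm_le ler01 _ _ => s /[dup] s01 /dF dFs; first exact: ex_derive.
rewrite derive_val (le_trans (normr_mulmx_le _ _)) // -mulrA ler_wpM2l // mulrC.
by rewrite ler_wpM2r // (f_near s s01).2.
Qed.

Lemma C1_curve_dist_le {N} {g : R -> 'rV[R]_N} {d : 'rV[R]_N} {a t : R} :
  C1_curve g -> (forall s, `[0, 1]%classic s -> `|derive1 g s - d| <= a * `|d|) ->
  `[0, 1]%classic t -> `|g t - g 0| <= (1 + a) * `|d|.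
Proof.
move=> [Og [_ [sO [dg _]]]] g'_near t01.
have /andP[t_ge0 t_le1] : 0 <= t <= 1 by move: t01; rewrite /= in_itv.
have in01 s : 0 <= s <= t -> `[0, 1]%classic s.
  by case/andP=> s_ge0 s_le; rewrite /= in_itv /= s_ge0 (le_trans s_le).
have Dg_le s : 0 <= s <= t -> `|'D_1 g s| <= (1 + a) * `|d|.
  move=> /in01 s01; rewrite -derive1E -[derive1 g s](subrK d).
  by rewrite (le_trans (ler_normD _ _)) // mulrDl mul1r addrC lerD2l g'_near.
have k_ge0 : 0 <= (1 + a) * `|d| by apply: le_trans (Dg_le 0 _); rewrite ?lexx.
rewrite (le_trans (mvt_mx_norm_le t_ge0 _ Dg_le)) ?subr0 ?ler_piMr //.
by move=> s /in01 /sO /dg.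
Qed.

Lemma approx_chord_curve_ball {N} {S : set 'rV[R]_N} {g : R -> 'rV[R]_N}
    {x z z' : 'rV[R]_N} {rho r a t : R} :
  approx_chord_curve S a z z' g -> ball x rho z -> ball x rho z' ->
  5 * rho <= r -> a <= 1 -> `[0, 1]%classic t -> ball x r (g t).
Proof.
move=> [g_C1 [_ [g0 [_ g'_near]]]].
rewrite -!ball_normE /ball_ /= => xz xz' rho_r a_le1 t01.
have := C1_curve_dist_le g_C1 g'_near t01; rewrite g0.
have : (1 + a) * `|z' - z| <= 2 * `|z' - z| by rewrite ler_wpM2r //; lra.
have := ler_distD x z' z; have := ler_distD z x (g t).
rewrite (distrC z' x) (distrC z (g t)).
lra.
Qed.

End Chords.

Section Embedding.
Context {R : realType}.

Lemma C1_curve_comp {n m} (U : set 'rV[R]_n) (H : 'rV[R]_n -> 'rV[R]_m)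
    (g : R -> 'rV[R]_n) :
  open U -> C1_on U H -> C1_curve g ->
  (forall t, `[0, 1]%classic t -> U (g t)) -> C1_curve (H \o g).
Proof.
move=> oU [dH cJ] [Og [oO [sO [dg cg']]]] gU.
have cg t : Og t -> {for t, continuous g}.
  by move=> /dg /derivable1_diffP /differentiable_continuous.
pose O' := Og `&` g @^-1` U.
have O'_nbhs t : O' t -> \forall s \near t, O' s.
  move=> [Ot Ugt]; apply: filterI; first by move: oO; rewrite openE; apply.
  by apply: (cg t Ot); move: oU; rewrite openE; apply.
have dHg t : O' t -> derive1 (H \o g) t = derive1 g t *m jacobian H (g t).
  by move=> [/dg /derivable1_diffP dgt /dH dHgt]; exact: derive1_comp_jacobian.
exists O'; split; [|split; [|split]].
- by rewrite openE => t /O'_nbhs.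
- by move=> t t01; split; [exact: sO | exact: gU].
- move=> t [/dg /derivable1_diffP dgt /dH dHgt]; apply/derivable1_diffP.
  exact: differentiable_comp.
- move=> t /set_mem /[dup] O't [Ot Ugt].
  have dHg_near : \forall s \near t, derive1 g s *m jacobian H (g s) = derive1 (H \o g) s.
    by apply: filterS (O'_nbhs t O't) => s /dHg.
  rewrite /continuous_at -(nbhs_singleton dHg_near).
  apply: cvg_trans (near_eq_cvg dHg_near) _.
  apply: (continuous_mulmx _ (jacobian H \o g)); first by apply: cg'; rewrite inE.
  exact: continuous_comp (cg t Ot) (cJ _ (mem_set Ugt)).
Qed.

Lemma homeo_onto_image_nbhs {n m} (U : set 'rV[R]_n) (H : 'rV[R]_n -> 'rV[R]_m)
    x (rho : R) :
  homeo_onto_image U H -> U x -> 0 < rho ->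
  nbhs (H x) [set y | forall w, U w -> H w = y -> ball x rho w].
Proof.
move=> [G [GH [_ cG]]] Ux rho_gt0.
have HUx : (H @` U) (H x) by exists x.
have := (subspace_continuousP _ _).1 cG (H x) HUx.
rewrite /from_subspace GH // => /(_ _ (nbhsx_ballx x rho rho_gt0)).
move=> nG; near=> y => w Uw Hwy.
have HUy : (H @` U) y by exists w.
by rewrite -(GH w Uw) Hwy; move: HUy; near: y; exact: nG.
Unshelve. all: by end_near.
Qed.

Lemma C1_on_jacobian_near {n m} {U : set 'rV[R]_n} {H : 'rV[R]_n -> 'rV[R]_m}
    {x : 'rV[R]_n} {eta : R} :
  open U -> C1_on U H -> U x -> 0 < eta ->
  \forall p \near x, U p /\ `|jacobian H p - jacobian H x| <= eta.
Proof.
move=> oU H_C1 Ux eta_gt0.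
have /cvgrPdist_le /(_ eta eta_gt0) J_near := H_C1.2 _ (mem_set Ux).
near=> p; split; first by near: p; apply: open_nbhs_nbhs.
by rewrite distrC; near: p.
Unshelve. all: by end_near.
Qed.

End Embedding.

Section NearLinearChords.
Context {R : realType} {n m : nat} {U : set 'rV[R]_n} {H : 'rV[R]_n -> 'rV[R]_m}.
Context {x : 'rV[R]_n} {r c K eta : R}.
Let A := jacobian H x.
Hypotheses (oU : open U) (H_C1 : C1_on U H).
Hypothesis ball_near :
  forall p, ball x r p -> U p /\ `|jacobian H p - A| <= eta.
Hypothesis c_gt0 : 0 < c.
Hypothesis A_bounded_below : forall v : 'rV[R]_n, `|v| <= c * `|v *m A|.
Hypothesis K_ge : n%:R <= K.
Hypothesis cKeta_le : 2 * c * K * eta <= 1.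
Context {z z' : 'rV[R]_n}.
Hypotheses (z_ball : ball x r z) (z'_ball : ball x r z').

Let H_diff_ball p : ball x r p -> differentiable H p.
Proof. by move=> /ball_near[/H_C1.1]. Qed.

Let jacobian_near p : ball x r p -> `|jacobian H p - A| <= eta.
Proof. by move=> /ball_near[]. Qed.

Let eta_ge0 : 0 <= eta := le_trans (normr_ge0 _) (jacobian_near _ z_ball).
Let K_ge0 : 0 <= K := le_trans (ler0n _ _) K_ge.

Lemma chord_near_linear : `|H z' - H z - (z' - z) *m A| <= K * eta * `|z' - z|.
Proof.
apply: le_trans (chord_jacobian_le H A z z' eta _) _.
  move=> s s01; have p_ball := ball_segment z_ball z'_ball s01.
  by split; [exact: H_diff_ball | exact: jacobian_near].
by rewrite ler_wpM2r // ler_wpM2r.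
Qed.

Lemma chord_lower_bound : `|z' - z| <= 2 * c * `|H z' - H z|.
Proof.
set d := z' - z; set e := H z' - H z.
have dA_le : `|d *m A| <= `|e| + K * eta * `|d|.
  rewrite -[d *m A](subrKC e) (le_trans (ler_normD _ _)) // lerD2l distrC.
  exact: chord_near_linear.
have := ler_wpM2l (ltW c_gt0) dA_le.
have := ler_wpM2r (normr_ge0 d) cKeta_le.
have := A_bounded_below d.
lra.
Qed.

Lemma image_curve_derive_le {g : R -> 'rV[R]_n} {a t : R} : 0 <= a ->
  differentiable g t -> ball x r (g t) ->
  `|derive1 g t - (z' - z)| <= a * `|z' - z| ->
  `|derive1 (H \o g) t - (H z' - H z)|
    <= 2 * c * K * (a * (`|A| + eta) + 2 * eta) * `|H z' - H z|.
Proof.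
move=> a_ge0 dg gt_ball g'_near.
rewrite derive1_comp_jacobian //; last exact: H_diff_ball.
set d := z' - z; set e := H z' - H z; set Jt := jacobian H (g t).
have telescope (V : zmodType) (u v w y : V) : u - y = (u - v) + (v - w) - (y - w).
  by rewrite addrA subrK opprB addrA subrK.
rewrite (telescope _ _ (d *m Jt) (d *m A)) -mulmxBl -mulmxBr.
have Jt_le : `|Jt| <= `|A| + eta.
  by rewrite -[Jt](subrK A) addrC (le_trans (ler_normD _ _)) // lerD2l jacobian_near.
have b1 : `|(derive1 g t - d) *m Jt| <= K * (a * `|d| * (`|A| + eta)).
  by rewrite (le_trans (normr_mulmx_le _ _)) // ler_pM ?mulr_ge0 // ler_pM.
have b2 : `|d *m (Jt - A)| <= K * (`|d| * eta).
  by rewrite (le_trans (normr_mulmx_le _ _)) // ler_pM ?mulr_ge0 // ler_pM ?jacobian_near.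
have b3 : `|e - d *m A| <= K * eta * `|d| := chord_near_linear.
have S_ge0 : 0 <= K * (a * (`|A| + eta) + 2 * eta).
  by rewrite mulr_ge0 // addr_ge0 ?mulr_ge0 ?addr_ge0.
have split_bound : K * (a * `|d| * (`|A| + eta)) + K * (`|d| * eta) + K * eta * `|d|
    = K * (a * (`|A| + eta) + 2 * eta) * `|d| by ring.
rewrite (le_trans (ler_normB _ _)) // (le_trans (lerD (ler_normD _ _) (lexx _))) //.
rewrite (le_trans (lerD (lerD b1 b2) b3)) // split_bound.
rewrite [leRHS](_ : _ = K * (a * (`|A| + eta) + 2 * eta) * (2 * c * `|e|)); last by ring.
by rewrite ler_wpM2l // chord_lower_bound.
Qed.

Lemma approx_chord_curve_comp {C : set 'rV[R]_n} {g : R -> 'rV[R]_n} {a eps : R} :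
  0 <= a -> 2 * c * K * (a * (`|A| + eta) + 2 * eta) <= eps ->
  approx_chord_curve C a z z' g -> (forall t, `[0, 1]%classic t -> ball x r (g t)) ->
  approx_chord_curve (H @` (C `&` U)) eps (H z) (H z') (H \o g).
Proof.
move=> a_ge0 err_le [g_C1 [gC [g0 [g1 g'_near]]]] g_ball.
have g_U t : `[0, 1]%classic t -> U (g t) by move=> /g_ball /ball_near[].
split; [|split; [|split; [|split]]].
- exact: C1_curve_comp oU H_C1 g_C1 g_U.
- by move=> t t01; exists (g t); split; [exact: gC | exact: g_U].
- by rewrite /= g0.
- by rewrite /= g1.
move=> t t01; have g_diff : differentiable g t.
  by case: g_C1 => Og [_ [sO [dg _]]]; apply/derivable1_diffP/dg/sO.
apply: le_trans (image_curve_derive_le a_ge0 g_diff (g_ball t t01) (g'_near t t01)) _.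
by rewrite ler_wpM2r.
Qed.

End NearLinearChords.

Lemma exists_tolerances {R : realType} {c K alpha eps : R} :
  0 < c -> 0 < K -> 0 <= alpha -> 0 < eps ->
  exists eta a : R, [/\ 0 < eta, 0 < a, a <= 1, 2 * c * K * eta <= 1
    & 2 * c * K * (a * (alpha + eta) + 2 * eta) <= eps].
Proof.
move=> c_gt0 K_gt0 alpha_ge0 eps_gt0.
pose e := Num.min eps 1; pose eta := e / (6 * c * K).
have e_gt0 : 0 < e by rewrite lt_min eps_gt0 ltr01.
have eta_gt0 : 0 < eta by rewrite divr_gt0 // !mulr_gt0.
have cKeta : 6 * c * K * eta = e by rewrite /eta mulrC divfK // !mulf_neq0 ?gt_eqF.
have e_le_eps : e <= eps by rewrite ge_min lexx.
have e_le1 : e <= 1 by rewrite ge_min lexx orbT.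
exists eta, (eta / (alpha + eta)); split => //.
- by rewrite divr_gt0 // ltr_wpDl.
- by rewrite ler_pdivrMr ?ltr_wpDl // mul1r lerDr.
- lra.
- by rewrite divfK ?gt_eqF ?ltr_wpDl //; lra.
Qed.

Theorem lemma3p5 (R : realType) (n m : nat) (C U : set 'rV[R]_n)
    (xbar : 'rV[R]_n) (H : 'rV[R]_n -> 'rV[R]_m) :
  C xbar -> smoothly_approx_convex C xbar ->
  open U -> U xbar -> C1_embedding U H ->
  smoothly_approx_convex (H @` (C `&` U)) (H xbar).
Proof.
move=> _ C_sac oU Uxbar [H_C1 [dH_inj H_homeo]] eps eps_gt0.
set A := jacobian H xbar; pose K : R := n.+1%:R.
have [c c_gt0 A_below] := row_free_bounded_below (row_free_jacobian (dH_inj _ Uxbar)).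
have [eta [a [eta_gt0 a_gt0 a_le1 cKeta_le err_le]]] :=
  exists_tolerances c_gt0 (ltr0Sn _ n) (normr_ge0 A) eps_gt0.
have [WC [WC_nbhs WC_curves]] := C_sac a a_gt0.
have /nbhs_ballP[r r_gt0 r_ball] :
    \forall p \near xbar, (U p /\ `|jacobian H p - A| <= eta) /\ WC p.
  by apply: filterI; [exact: C1_on_jacobian_near | exact: WC_nbhs].
pose rho := r / 5.
have rho_r : ball xbar rho `<=` ball xbar r.
  by apply: le_ball; rewrite /rho ler_pdivrMr // ler_peMr ?ltW // ltr1n.
exists [set y | forall w, U w -> H w = y -> ball xbar rho w].
split; first by apply: homeo_onto_image_nbhs; rewrite // divr_gt0.
move=> _ _ [z [Cz Uz] <-] /(_ z Uz erefl) z_rho [z' [Cz' Uz'] <-] /(_ z' Uz' erefl) z'_rho.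
have [g g_approx] : exists g, approx_chord_curve C a z z' g :=
  WC_curves z z' Cz (r_ball _ (rho_r _ z_rho)).2 Cz' (r_ball _ (rho_r _ z'_rho)).2.
exists (H \o g); apply: (approx_chord_curve_comp oU H_C1 (fun p pr => (r_ball p pr).1)
  c_gt0 A_below _ cKeta_le (rho_r _ z_rho) (rho_r _ z'_rho) (ltW a_gt0) err_le g_approx).
- by rewrite ler_nat.
- move=> t; apply: approx_chord_curve_ball g_approx z_rho z'_rho _ a_le1.
  by rewrite /rho mulrC divfK.
Unshelve. all: by end_near.
Qed.
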